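(* If $Q$ and $Q'$ are proper quadrilaterals in $K^2$ sharing the same vertices, then two lines are $Q$-orthogonal if and only if they are $Q'$-orthogonal.
   Context: $K$ is a field of characteristic $\neq 2$. Every line $L$ in $K^2$ has an equation $tX-uY+v=0$ normalized so that $t=1$ if $u=0$ and $u=1$ if $u\neq 0$; coefficients denoted $t_L,u_L,v_L$. A quadrilateral $Q=ABA'B'$ consists of four distinct lines $A,B,A',B'$ (sides), not all through one point, with adjacent sides ($A,B$; $B,A'$; $A',B'$; $B',A$) not parallel; opposite sides may be parallel. Vertices: $A\cap B$, $B\cap A'$, $A'\cap B'$, $B'\cap A$. $Q$ is proper if no three sides pass through a common point. Let $\alpha=t_Au_Bu_{A'}u_{B'}-u_At_Bu_{A'}u_{B'}+u_Au_Bt_{A'}u_{B'}-u_Au_Bu_{A'}t_{B'}$, $\beta=t_Au_Bt_{A'}u_{B'}-u_At_Bu_{A'}t_{B'}$, $\gamma=t_At_Bt_{A'}u_{B'}-t_At_Bu_{A'}t_{B'}+t_Au_Bt_{A'}t_{B'}-u_At_Bt_{A'}t_{B'}$, and $\langle \mathbf v,\mathbf w\rangle_Q=\mathbf v^T\begin{pmatrix}\gamma&-\beta\\-\beta&\alpha\end{pmatrix}\mathbf w$. Lines $\ell_1,\ell_2$ are $Q$-orthogonal if $\langle (u_{\ell_1},t_{\ell_1}),(u_{\ell_2},t_{\ell_2})\rangle_Q=0$. *)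

From HB Require Import structures.
From mathcomp Require Import all_boot all_order all_algebra.
Set Implicit Arguments. Unset Strict Implicit. Unset Printing Implicit Defensive.
Import GRing.Theory.
Local Open Scope ring_scope.

(* A line of K^2, given by its normalized equation  t X - u Y + v = 0,
   normalized so that t = 1 if u = 0 and u = 1 if u <> 0. *)
Record line (K : fieldType) := Line {
  t_ : K; u_ : K; v_ : K;
  line_normalized : ((u_ == 0) && (t_ == 1)) || (u_ == 1) }.

Definition point (K : fieldType) := (K * K)%type.

Definition on_line (K : fieldType) (p : point K) (L : line K) : Prop :=
  t_ L * p.1 - u_ L * p.2 + v_ L = 0.

(* parallel lines (same direction; this includes equal lines) *)
Definition parallel (K : fieldType) (L M : line K) : Prop :=
  t_ L * u_ M - u_ L * t_ M = 0.

Definition is_quad (K : fieldType) (A B A' B' : line K) : Prop :=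
  ([/\ A <> B, A <> A' & A <> B'] /\ [/\ B <> A', B <> B' & A' <> B']) /\
  ~ (exists p, [/\ on_line p A, on_line p B, on_line p A' & on_line p B']) /\
  [/\ ~ parallel A B, ~ parallel B A', ~ parallel A' B' & ~ parallel B' A].

Definition concurrent3 (K : fieldType) (L M N : line K) : Prop :=
  exists p, [/\ on_line p L, on_line p M & on_line p N].

Definition is_proper_quad (K : fieldType) (A B A' B' : line K) : Prop :=
  is_quad A B A' B' /\
  [/\ ~ concurrent3 A B A', ~ concurrent3 A B B',
      ~ concurrent3 A A' B' & ~ concurrent3 B A' B'].

(* p is a vertex of Q = A B A' B' : one of A∩B, B∩A', A'∩B', B'∩A
   (each is a single point since adjacent sides are not parallel) *)
Definition is_vertex (K : fieldType) (A B A' B' : line K) (p : point K) : Prop :=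
  (on_line p A /\ on_line p B) \/ (on_line p B /\ on_line p A') \/
  (on_line p A' /\ on_line p B') \/ (on_line p B' /\ on_line p A).

Definition qalpha (K : fieldType) (A B A' B' : line K) : K :=
  t_ A * u_ B * u_ A' * u_ B' - u_ A * t_ B * u_ A' * u_ B'
  + u_ A * u_ B * t_ A' * u_ B' - u_ A * u_ B * u_ A' * t_ B'.

Definition qbeta (K : fieldType) (A B A' B' : line K) : K :=
  t_ A * u_ B * t_ A' * u_ B' - u_ A * t_ B * u_ A' * t_ B'.

Definition qgamma (K : fieldType) (A B A' B' : line K) : K :=
  t_ A * t_ B * t_ A' * u_ B' - t_ A * t_ B * u_ A' * t_ B'
  + t_ A * u_ B * t_ A' * t_ B' - u_ A * t_ B * t_ A' * t_ B'.

Definition qform (K : fieldType) (A B A' B' : line K) (v w : K * K) : K :=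
  v.1 * (qgamma A B A' B' * w.1 - qbeta A B A' B' * w.2)
  + v.2 * (- qbeta A B A' B' * w.1 + qalpha A B A' B' * w.2).

Definition q_orthogonal (K : fieldType) (A B A' B' : line K) (l1 l2 : line K) : Prop :=
  qform A B A' B' (u_ l1, t_ l1) (u_ l2, t_ l2) = 0.

From mathcomp Require Import all_boot all_order all_algebra ring.
Import GRing.Theory.
Set Implicit Arguments.
Local Open Scope ring_scope.

(* Each side of a proper quadrilateral joins two consecutive vertices, so its
   direction vector (u, t) is a nonzero multiple of the difference of these
   vertices.  Substituting, the Q-form becomes a nonzero multiple of a form
   [vertex_form] of the four vertices taken in cyclic order, and this form is
   alternating in the vertices.  Hence two proper quadrilaterals with the same
   vertices have proportional forms, and the same orthogonal pairs. *)

Section QuadrilateralForms.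
Variable K : fieldType.
Implicit Types (L M : line K) (p q : point K).

Definition meet L M : point K :=
  let d := t_ L * u_ M - u_ L * t_ M in
  ((u_ L * v_ M - v_ L * u_ M) / d, (t_ L * v_ M - t_ M * v_ L) / d).

Lemma on_line_meetl L M : ~ parallel L M -> on_line (meet L M) L.
Proof. by move/eqP=> nLM; rewrite /on_line /=; field. Qed.

Lemma on_line_meetr L M : ~ parallel L M -> on_line (meet L M) M.
Proof. by move/eqP=> nLM; rewrite /on_line /=; field. Qed.

Lemma meet_unique L M p :
  ~ parallel L M -> on_line p L -> on_line p M -> p = meet L M.
Proof.
rewrite /parallel /on_line => /eqP nLM pL pM.
case: p pL pM => x y /= pL pM; congr (_, _); apply: (mulIf nLM); rewrite divfK //;
  apply: subr0_eq.
- transitivity (u_ M * (t_ L * x - u_ L * y + v_ L) - u_ L * (t_ M * x - u_ M * y + v_ M));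
    first ring.
  by rewrite pL pM !mulr0 subrr.
- transitivity (t_ M * (t_ L * x - u_ L * y + v_ L) - t_ L * (t_ M * x - u_ M * y + v_ M));
    first ring.
  by rewrite pL pM !mulr0 subrr.
Qed.

Lemma on_line_sub L p q : on_line p L -> on_line q L -> p != q ->
  exists2 l, l != 0 & q - p = (l * u_ L, l * t_ L).
Proof.
move=> hp hq pq; suff [l e] : exists l, q - p = (l * u_ L, l * t_ L).
  exists l => //; apply: contra_neq pq => l0.
  by apply/eqP; rewrite eq_sym -subr_eq0 e l0 !mul0r.
move: hp hq; rewrite /on_line; case: p q {pq} => [x y] [x' y'] /= hp hq.
have slope : t_ L * (x' - x) = u_ L * (y' - y).
  apply: subr0_eq.
  transitivity ((t_ L * x' - u_ L * y' + v_ L) - (t_ L * x - u_ L * y + v_ L)); first ring.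
  by rewrite hp hq subrr.
case/orP: (line_normalized L) => [/andP[/eqP u0 /eqP t1] | /eqP u1].
- exists (y' - y); congr (_, _); rewrite u0 t1 mul1r mul0r in slope *.
  + by rewrite slope mulr0.
  + by rewrite mulr1.
- exists (x' - x); congr (_, _); rewrite u1 mul1r in slope *.
  + by rewrite mulr1.
  + by rewrite mulrC slope.
Qed.

Definition side_form (a b c d w z : K * K) : K :=
  let al := a.2 * b.1 * c.1 * d.1 - a.1 * b.2 * c.1 * d.1
            + a.1 * b.1 * c.2 * d.1 - a.1 * b.1 * c.1 * d.2 in
  let be := a.2 * b.1 * c.2 * d.1 - a.1 * b.2 * c.1 * d.2 in
  let ga := a.2 * b.2 * c.2 * d.1 - a.2 * b.2 * c.1 * d.2
            + a.2 * b.1 * c.2 * d.2 - a.1 * b.2 * c.2 * d.2 in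
  w.1 * (ga * z.1 - be * z.2) + w.2 * (- be * z.1 + al * z.2).

Lemma qform_side_form (A B A' B' : line K) :
  qform A B A' B' = side_form (u_ A, t_ A) (u_ B, t_ B) (u_ A', t_ A') (u_ B', t_ B').
Proof. by []. Qed.

Lemma side_form_scale (la lb lc ld a1 a2 b1 b2 c1 c2 d1 d2 : K) (w z : K * K) :
  side_form (la * a1, la * a2) (lb * b1, lb * b2) (lc * c1, lc * c2) (ld * d1, ld * d2) w z
  = la * lb * lc * ld * side_form (a1, a2) (b1, b2) (c1, c2) (d1, d2) w z.
Proof. by rewrite /side_form /=; ring. Qed.

Definition vertex_form (P1 P2 P3 P4 : point K) : K * K -> K * K -> K :=
  side_form (P1 - P4) (P2 - P1) (P3 - P2) (P4 - P3).

Definition quad_vertices (A B A' B' : line K) : seq (point K) :=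
  [:: meet A B; meet B A'; meet A' B'; meet B' A].

Lemma is_vertex_quad_vertices (A B A' B' : line K) p : is_quad A B A' B' ->
  is_vertex A B A' B' p <-> p \in quad_vertices A B A' B'.
Proof.
case=> _ [_ [nAB nBA' nA'B' nB'A]]; rewrite !inE; split.
- case=> [[pA pB] | [[pB pA'] | [[pA' pB'] | [pB' pA]]]].
  + by rewrite (meet_unique nAB pA pB) eqxx.
  + by rewrite (meet_unique nBA' pB pA') eqxx orbT.
  + by rewrite (meet_unique nA'B' pA' pB') eqxx !orbT.
  + by rewrite (meet_unique nB'A pB' pA) eqxx !orbT.
- case/or4P=> /eqP ->; rewrite /is_vertex.
  + by left; split; [apply: on_line_meetl | apply: on_line_meetr].
  + by right; left; split; [apply: on_line_meetl | apply: on_line_meetr].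
  + by right; right; left; split; [apply: on_line_meetl | apply: on_line_meetr].
  + by right; right; right; split; [apply: on_line_meetl | apply: on_line_meetr].
Qed.

Lemma meet_eq_on_line L M N O : ~ parallel L M -> ~ parallel N O ->
  meet L M = meet N O ->
  [/\ on_line (meet L M) L, on_line (meet L M) M,
      on_line (meet L M) N & on_line (meet L M) O].
Proof.
move=> nLM nNO e; rewrite [in on_line _ N]e [in on_line _ O]e.
by split; [apply: on_line_meetl | apply: on_line_meetr
          | apply: on_line_meetl | apply: on_line_meetr].
Qed.

Lemma uniq_quad_vertices (A B A' B' : line K) :
  is_proper_quad A B A' B' -> uniq (quad_vertices A B A' B').
Proof.
case=> -[_ [_ [nAB nBA' nA'B' nB'A]]] [cABA' cABB' cAA'B' cBA'B'].
rewrite /= !inE !negb_or !andbT.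
apply/and3P; split; [apply/and3P; split | apply/andP; split | ]; apply/eqP.
- by move/(meet_eq_on_line nAB nBA') => [? ? ? ?]; apply: cABA'; exists (meet A B).
- by move/(meet_eq_on_line nAB nA'B') => [? ? ? ?]; apply: cABA'; exists (meet A B).
- by move/(meet_eq_on_line nAB nB'A) => [? ? ? ?]; apply: cABB'; exists (meet A B).
- by move/(meet_eq_on_line nBA' nA'B') => [? ? ? ?]; apply: cBA'B'; exists (meet B A').
- by move/(meet_eq_on_line nBA' nB'A) => [? ? ? ?]; apply: cABA'; exists (meet B A').
- by move/(meet_eq_on_line nA'B' nB'A) => [? ? ? ?]; apply: cAA'B'; exists (meet A' B').
Qed.

Lemma vertex_form_qform (A B A' B' : line K) : is_proper_quad A B A' B' ->
  exists2 c, c != 0 & forall w z,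
    vertex_form (meet A B) (meet B A') (meet A' B') (meet B' A) w z
    = c * qform A B A' B' w z.
Proof.
move=> hQ; have := uniq_quad_vertices hQ.
case: hQ => -[_ [_ [nAB nBA' nA'B' nB'A]]] _.
rewrite /= !inE !negb_or !andbT => /and3P[/and3P[P12 _ P14] /andP[P23 _] P34].
have P41 : meet B' A != meet A B by rewrite eq_sym.
rewrite /vertex_form.
have [la la0 ->] := on_line_sub (on_line_meetr nB'A) (on_line_meetl nAB) P41.
have [lb lb0 ->] := on_line_sub (on_line_meetr nAB) (on_line_meetl nBA') P12.
have [lc lc0 ->] := on_line_sub (on_line_meetr nBA') (on_line_meetl nA'B') P23.
have [ld ld0 ->] := on_line_sub (on_line_meetr nA'B') (on_line_meetl nB'A) P34.
by exists (la * lb * lc * ld) => [|w z];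
  rewrite ?side_form_scale ?qform_side_form ?mulf_neq0.
Qed.

Lemma vertex_form_reorder (P1 P2 P3 P4 R1 R2 R3 R4 : point K) :
  uniq [:: R1; R2; R3; R4] -> {subset [:: R1; R2; R3; R4] <= [:: P1; P2; P3; P4]} ->
  (forall w z, vertex_form R1 R2 R3 R4 w z = vertex_form P1 P2 P3 P4 w z) \/
  (forall w z, vertex_form R1 R2 R3 R4 w z = - vertex_form P1 P2 P3 P4 w z).
Proof.
(* Exhaustive check over the 24 orderings; the sign is that of the permutation. *)
rewrite /= !inE !negb_or !andbT.
move=> /and3P[/and3P[/eqP ? /eqP ? /eqP ?] /andP[/eqP ? /eqP ?] /eqP ?] /allP.
rewrite /= !inE andbT => /and4P[].
do 4 (case/or4P=> /eqP ?; subst; try by exfalso; congruence).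
all: rewrite /vertex_form /side_form /=.
all: first [by left=> w z; ring | by right=> w z; ring].
Qed.

Lemma qform_proportional (A B A' B' C D C' D' : line K) :
  is_proper_quad A B A' B' -> is_proper_quad C D C' D' ->
  quad_vertices C D C' D' =i quad_vertices A B A' B' ->
  exists2 k, k != 0 & forall w z, qform C D C' D' w z = k * qform A B A' B' w z.
Proof.
move=> hQ hQ' same.
have [c c0 hc] := vertex_form_qform hQ.
have [c' c'0 hc'] := vertex_form_qform hQ'.
have sub : {subset quad_vertices C D C' D' <= quad_vertices A B A' B'}.
  by move=> p; rewrite same.
have [e|e] := vertex_form_reorder (uniq_quad_vertices hQ') sub.
- exists (c / c'); first by rewrite mulf_neq0 ?invr_eq0.
  by move=> w z; apply: (mulfI c'0); rewrite -hc' e hc; field.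
- exists (- (c / c')); first by rewrite oppr_eq0 mulf_neq0 ?invr_eq0.
  by move=> w z; apply: (mulfI c'0); rewrite -hc' e hc; field.
Qed.

End QuadrilateralForms.

Theorem corollary2p7 (K : fieldType) (hK : (2%:R : K) != 0)
  (A B A' B' C D C' D' : line K) :
  is_proper_quad A B A' B' -> is_proper_quad C D C' D' ->
  (forall p : point K, is_vertex A B A' B' p <-> is_vertex C D C' D' p) ->
  forall l1 l2 : line K,
    q_orthogonal A B A' B' l1 l2 <-> q_orthogonal C D C' D' l1 l2.
Proof.
move=> hQ hQ' hv l1 l2.
have same : quad_vertices C D C' D' =i quad_vertices A B A' B'.
  move=> p; apply/idP/idP.
  - by move/(is_vertex_quad_vertices p hQ'.1)/hv/(is_vertex_quad_vertices p hQ.1).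
  - by move/(is_vertex_quad_vertices p hQ.1)/hv/(is_vertex_quad_vertices p hQ'.1).
have [k k0 hk] := qform_proportional hQ hQ' same.
rewrite /q_orthogonal hk; split=> [->|/eqP]; first by rewrite mulr0.
by rewrite mulf_eq0 (negbTE k0) => /eqP.
Qed.
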